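(* Let $h\in\mathbb N$, $u,v\in\mathfrak S_n$, and let $F$ be an $h$-flipclass of paths from $u$ to $v$. Then every vertex $(x,i)$ of $TS_F$ with $i>1$ has in-degree at least $2$ in $TS_F$, and every vertex $(x,i)$ of $TS_F$ with $i<h-1$ has out-degree at least $2$ in $TS_F$.
   Context: $\mathfrak S_n$ is the symmetric group on $[n]$, $T$ its transpositions, $\ell$ the length w.r.t. simple transpositions. The Bruhat graph $B(\mathfrak S_n)$ has an edge $x\xrightarrow{t}y$ iff $yx^{-1}=t\in T$ and $\ell(x)<\ell(y)$; $P_h(u,v)$ is the set of paths $u=x_0\to\cdots\to x_h=v$ of length $h$. Between two fixed vertices there are $0$ or $2$ paths of length $2$, each the flip of the other; the $i$-th flip operator $f_i$ ($i\in[h-1]$) on $P_h(u,v)$ replaces $x_{i-1}\to x_i\to x_{i+1}$ by its flip; the orbits of $\langle f_1,\dots,f_{h-1}\rangle$ on $P_h(u,v)$ are the $h$-flipclasses of paths from $u$ to $v$. The time-support graph $TS_F$ of such $F$ has vertices $(a,i)$ ($0\le i\le h$) such that some path $(x_0,\dots,x_h)\in F$ has $x_i=a$, and edges $(a,i)\xrightarrow{t}(b,i+1)$ whenever some path of $F$ contains the edge $x_i=a\xrightarrow{t}b=x_{i+1}$. *)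

From mathcomp Require Import all_boot all_fingroup.
Set Implicit Arguments. Unset Strict Implicit. Unset Printing Implicit Defensive.

Notation Sn n := {perm 'I_n}.

Definition is_transposition n (t : Sn n) : bool :=
  [exists a : 'I_n, exists b : 'I_n, (a != b) && (t == tperm a b)].

(* Length w.r.t. simple transpositions = number of inversions. *)
Definition perm_length n (s : Sn n) : nat :=
  #|[set ij : 'I_n * 'I_n | (ij.1 < ij.2) && (s ij.2 < s ij.1)]|.

(* Bruhat graph edge x -> y : y x^-1 in T and l(x) < l(y).
   (mathcomp's product of permutations is composition in diagrammatic order;
   since T is closed under conjugation, "y*x^-1 in T" does not depend on the
   composition convention.) *)
Definition bruhat_edge n (x y : Sn n) : bool :=
  is_transposition (y * x^-1)%g && (perm_length x < perm_length y).

Definition Path n h := (h.+1).-tuple (Sn n).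

Definition vtx n h (p : Path n h) (i : nat) : Sn n := nth 1%g (tval p) i.

Definition is_path n h (u v : Sn n) (p : Path n h) : bool :=
  [&& vtx p 0 == u, vtx p h == v &
      [forall i : 'I_h, bruhat_edge (vtx p i) (vtx p i.+1)]].

(* q = f_i p for some i in [h-1]: q is the path of P_h(u,v) obtained from p
   by replacing x_{i-1} -> x_i -> x_{i+1} by its flip (the other path of
   length 2 between x_{i-1} and x_{i+1}). *)
Definition flip_rel n h (u v : Sn n) (p q : Path n h) : bool :=
  [&& is_path u v p, is_path u v q &
      [exists i : 'I_h, [&& 0 < (i : nat),
         [forall j : 'I_h.+1, ((j : nat) != i) ==> (vtx p j == vtx q j)] &
         vtx p i != vtx q i]]].

(* F is an h-flipclass of paths from u to v: an orbit of <f_1,...,f_{h-1}>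
   on P_h(u,v). *)
Definition flipclass n h (u v : Sn n) (F : {set Path n h}) : Prop :=
  exists2 p : Path n h, is_path u v p &
    F = [set q | connect (flip_rel u v) p q].

Definition ts_vertex n h (F : {set Path n h}) (x : Sn n) (i : nat) : bool :=
  (i <= h) && [exists p in F, vtx p i == x].

(* In-degree of (x,i) in TS_F: number of edges (a,i-1) -t-> (x,i); since the
   label t = x a^-1 is determined by a, this is the number of such a. *)
Definition ts_indeg n h (F : {set Path n h}) (x : Sn n) (i : nat) : nat :=
  #|[set a : Sn n | [exists p in F, (vtx p i.-1 == a) && (vtx p i == x)]]|.

Definition ts_outdeg n h (F : {set Path n h}) (x : Sn n) (i : nat) : nat :=
  #|[set b : Sn n | [exists p in F, (vtx p i == x) && (vtx p i.+1 == b)]]|.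

From mathcomp Require Import all_boot all_fingroup zify.
Set Implicit Arguments. Unset Strict Implicit. Unset Printing Implicit Defensive.

(* Every Bruhat path a -> b -> c of length two has a second middle vertex.
   Write b = (p q) a and c = (r s) b, the transpositions exchanging positions.
   If {p, q} and {r, s} are disjoint, the two transpositions commute and
   (r s) a is the other middle vertex.  Otherwise (r s)(p q) is a 3-cycle,
   which is a product of two transpositions in exactly three ways, and
   comparing the orders of the three positions and of their values under a
   shows that one of the two other factorizations is again a Bruhat path.
   Hence a path of F through (x, i) can be flipped at i - 1 (resp. i + 1)
   without moving x, which produces a second in- (resp. out-) neighbour. *)

Section Transpositions.
Variable T : finType.
Implicit Types x y z w : T.

Lemma tperm_mul_conjgC x y z w :
  (tperm z w * tperm x y = tperm x y * tperm (tperm x y z) (tperm x y w))%g.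
Proof. by rewrite conjgC tpermJ. Qed.

Lemma tperm_mul_conjgCV x y z w :
  (tperm z w * tperm x y = tperm (tperm z w x) (tperm z w y) * tperm z w)%g.
Proof. by rewrite conjgCV tpermV tpermJ. Qed.

Lemma tperm_chain_neq x y z : x != y -> y != z -> z != x -> tperm x y != tperm y z.
Proof.
move=> xy yz zx; have xz : x != z by rewrite eq_sym.
apply/eqP => /permP/(_ z); rewrite tpermR tpermD // => /eqP.
by rewrite eq_sym (negbTE yz).
Qed.

Lemma tperm_overlap p q r s : p != q -> r != s -> tperm p q != tperm r s ->
  ~~ [&& r != p, r != q, s != p & s != q] ->
  exists p' q' r' : T, [/\ [&& p' != q', q' != r' & r' != p'],
                       tperm p q = tperm p' q' & tperm r s = tperm q' r'].
Proof.
move=> pq rs t12; rewrite !negb_and !negbK => /or4P[] /eqP e; subst.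
- exists q, p, s; rewrite tpermC eq_sym pq rs /=; split=> //.
  by apply: contraNneq t12 => ->; rewrite tpermC.
- exists p, q, s; rewrite pq rs /=; split=> //.
  by apply: contraNneq t12 => ->; rewrite tpermC.
- exists q, p, r; rewrite eq_sym pq (tpermC p q) (tpermC r p) eq_sym rs /=; split=> //.
  by apply: contraNneq t12 => ->; rewrite tpermC.
- exists p, q, r; rewrite pq eq_sym rs (tpermC r q) /=; split=> //.
  by apply: contraNneq t12 => ->.
Qed.
End Transpositions.

Section BruhatEdge.
Variable n : nat.
Implicit Types (s : Sn n) (i j : 'I_n).

Definition inversions s : {set 'I_n * 'I_n} :=
  [set kl : 'I_n * 'I_n | (kl.1 < kl.2) && (s kl.2 < s kl.1)].

(* Moving each inversion {k, l} of s to {t k, t l}, unless t reverses the order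
   of k and l, injects the inversions of s into those of t * s, avoiding (i, j),
   where t = tperm i j. *)
Lemma perm_length_tperm_mul s i j : i < j -> s i < s j ->
  perm_length s < perm_length (tperm i j * s)%g.
Proof.
move=> lt_ij lt_sij; set t := tperm i j.
pose g (kl : 'I_n * 'I_n) := if t kl.1 < t kl.2 then (t kl.1, t kl.2) else kl.
have g_inv : {in inversions s, forall kl, g kl \in inversions (t * s)%g}.
  move=> [k l]; rewrite inE /g /= => /andP[lt_kl lt_slk].
  case: ifP => [lt_tkl | /negbT]; rewrite inE /= !permM ?tpermK.
    by rewrite lt_tkl.
  rewrite -leqNgt lt_kl /= /t.
  case: tpermP => [ek|ek|_ _]; case: tpermP => [el|el|_ _];
    move: lt_kl lt_slk; rewrite ?ek ?el; lia.
have g_inj : {in inversions s &, injective g}.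
  move=> [k l] [k' l']; rewrite !inE /g /= => /andP[lt_kl _] /andP[lt_kl' _].
  case: ifP => tkl; case: ifP => tkl' [ek el].
  - by rewrite (perm_inj ek) (perm_inj el).
  - by move: tkl'; rewrite -ek -el !tpermK; lia.
  - by move: tkl; rewrite ek el !tpermK; lia.
  - by rewrite ek el.
have ij_in : (i, j) \in inversions (t * s)%g.
  by rewrite inE /= !permM tpermL tpermR lt_ij.
have ij_notin : (i, j) \notin g @: inversions s.
  apply/imsetP => -[[k l]]; rewrite inE /g /= => /andP[lt_kl lt_slk].
  case: ifP => _ [ek el].
    by move: lt_kl; rewrite -(tpermK i j k) -(tpermK i j l) -ek -el tpermL tpermR; lia.
  by move: lt_slk; rewrite -ek -el; lia.
have sub : (i, j) |: g @: inversions s \subset inversions (t * s)%g.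
  by apply/subsetP => kl /setU1P[-> //|/imsetP[kl' /g_inv + ->]].
by have := subset_leq_card sub; rewrite cardsU1 ij_notin card_in_imset.
Qed.
Lemma is_transposition_tperm i j : i != j -> is_transposition (tperm i j).
Proof. by move=> ij; apply/existsP; exists i; apply/existsP; exists j; rewrite ij eqxx. Qed.

(* tperm i j * s is s with the entries at positions i and j exchanged. *)
Lemma bruhat_edge_tperm s i j : i != j ->
  bruhat_edge s (tperm i j * s)%g = ((i < j) == (s i < s j)).
Proof.
move=> ij; rewrite /bruhat_edge mulgK is_transposition_tperm //=.
have sij : (s i : nat) != s j by rewrite val_eqE (inj_eq perm_inj).
wlog lt_ij : i j ij sij / i < j.
  move=> edge_lt; move: (ij); rewrite -val_eqE neq_ltn => /orP[lt_ij|lt_ji].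
    exact: edge_lt.
  rewrite tpermC (edge_lt j i) 1?eq_sym // lt_ji (leq_gtF (ltnW lt_ji)).
  by case: ltngtP sij.
rewrite lt_ij; case: (ltngtP (s i) (s j)) => [lt_sij|lt_sji|/eqP].
- exact: perm_length_tperm_mul.
- apply/negbTE; rewrite -leqNgt ltnW //.
  have := @perm_length_tperm_mul (tperm i j * s)%g _ _ lt_ij.
  by rewrite !permM tpermL tpermR tpermKg; apply.
- by rewrite (negbTE sij).
Qed.

Lemma bruhat_edge_by_tperm s y : bruhat_edge s y ->
  exists i j, i != j /\ y = (tperm i j * s)%g.
Proof.
case/andP=> /existsP[i /existsP[j /andP[ij /eqP ysi]]] _.
by exists i, j; rewrite -ysi mulgKV.
Qed.
End BruhatEdge.

Section BruhatFlip.
Variable n : nat.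
Implicit Types (a b c : Sn n) (p q r s : 'I_n).

(* The hypotheses say that a -> (p q) a -> (q r) (p q) a is a Bruhat path;
   the disjuncts say that (q r) a, resp. (p r) a, is the middle vertex of
   another one. *)
Lemma three_point_orders a p q r : p != q -> q != r -> r != p ->
  (p < q) == (a p < a q) -> (q < r) == (a p < a r) ->
  ((q < r) == (a q < a r)) && ((p < r) == (a p < a q)) ||
  ((p < r) == (a p < a r)) && ((p < q) == (a r < a q)).
Proof.
have val_neq (x y : 'I_n) : x != y -> (x : nat) != y by [].
have aval_neq x y : x != y -> (a x : nat) != a y by rewrite val_eqE (inj_eq perm_inj).
move=> pq qr rp; move: (val_neq _ _ pq) (val_neq _ _ qr) (val_neq _ _ rp).
move: (aval_neq _ _ pq) (aval_neq _ _ qr) (aval_neq _ _ rp).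
case: (ltngtP p q); case: (ltngtP q r); case: (ltngtP r p);
case: (ltngtP (a p) (a q)); case: (ltngtP (a q) (a r)); case: (ltngtP (a r) (a p));
  rewrite //=; lia.
Qed.

Lemma bruhat_flip_disjoint a p q r s : p != q -> r != s ->
  [&& r != p, r != q, s != p & s != q] ->
  bruhat_edge a (tperm p q * a)%g ->
  bruhat_edge (tperm p q * a)%g (tperm r s * (tperm p q * a))%g ->
  exists2 b, b != (tperm p q * a)%g &
    bruhat_edge a b && bruhat_edge b (tperm r s * (tperm p q * a))%g.
Proof.
move=> pq rs /and4P[rp rq sp sq].
have [pr qr ps qs] : [/\ p != r, q != r, p != s & q != s].
  by rewrite !(eq_sym _ r) !(eq_sym _ s).
rewrite !bruhat_edge_tperm // !permM (tpermD pr qr) (tpermD ps qs) => e_pq e_rs.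
exists (tperm r s * a)%g.
  rewrite (inj_eq (mulIg a)); apply/eqP => /permP/(_ r).
  by rewrite tpermL tpermD // => /eqP; rewrite eq_sym (negbTE rs).
rewrite mulgA tperm_mul_conjgCV (tpermD rp sp) (tpermD rq sq) -mulgA.
by rewrite !bruhat_edge_tperm // !permM (tpermD rp sp) (tpermD rq sq) e_pq e_rs.
Qed.

Lemma bruhat_flip_shared a p q r : [&& p != q, q != r & r != p] ->
  bruhat_edge a (tperm p q * a)%g ->
  bruhat_edge (tperm p q * a)%g (tperm q r * (tperm p q * a))%g ->
  exists2 b, b != (tperm p q * a)%g &
    bruhat_edge a b && bruhat_edge b (tperm q r * (tperm p q * a))%g.
Proof.
case/and3P=> pq qr rp.
have [qp rq pr] : [/\ q != p, r != q & p != r] by split; rewrite eq_sym.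
rewrite !bruhat_edge_tperm // !permM tpermR (tpermD pr qr) => e_pq e_qr.
rewrite mulgA; case/orP: (three_point_orders pq qr rp e_pq e_qr) => /andP[e1 e2].
- exists (tperm q r * a)%g.
    by rewrite (inj_eq (mulIg a)) eq_sym tperm_chain_neq.
  rewrite tperm_mul_conjgCV tpermL (tpermD qp rp) -mulgA.
  by rewrite !bruhat_edge_tperm // !permM tpermR (tpermD qp rp) e1 e2.
- exists (tperm p r * a)%g.
    by rewrite (inj_eq (mulIg a)) tpermC tperm_chain_neq.
  rewrite tperm_mul_conjgC tpermR (tpermD pr qr) -mulgA.
  by rewrite !bruhat_edge_tperm // !permM tpermL (tpermD pq rq) e1 e2.
Qed.

Lemma bruhat_flip a b c : bruhat_edge a b -> bruhat_edge b c ->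
  exists2 b', b' != b & bruhat_edge a b' && bruhat_edge b' c.
Proof.
move=> ab bc; have ca : c != a.
  apply: contraTneq bc => ->; apply/negP => /andP[_ lt_ba].
  by case/andP: ab => _ /(ltn_trans lt_ba); rewrite ltnn.
have [p [q [pq def_b]]] := bruhat_edge_by_tperm ab.
have [r [s [rs def_c]]] := bruhat_edge_by_tperm bc.
have t12 : tperm p q != tperm r s.
  by apply: contraNneq ca => t12; rewrite def_c def_b -t12 tpermKg.
rewrite {}def_c {}def_b in ab bc *.
have [disj|] := boolP [&& r != p, r != q, s != p & s != q].
  exact: bruhat_flip_disjoint.
case/(tperm_overlap pq rs t12)=> p' [q' [r' [d3 e1 e2]]].
by rewrite e1 e2 in ab bc *; apply: bruhat_flip_shared.
Qed.

End BruhatFlip.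

Section FlipClass.
Variables (n h : nat) (u v : Sn n).
Implicit Types (p q : Path n h) (F : {set Path n h}).

Lemma is_path_flip p k : is_path u v p -> 0 < k < h ->
  exists q, [/\ flip_rel u v p q, vtx q k != vtx p k &
                forall j, j != k -> vtx q j = vtx p j].
Proof.
move=> path_p /andP[k_gt0 lt_kh]; case/and3P: (path_p) => /eqP p0 /eqP ph /forallP e_p.
have e_prev : bruhat_edge (vtx p k.-1) (vtx p k).
  by have := e_p (Ordinal (leq_ltn_trans (leq_pred k) lt_kh)); rewrite /= prednK.
have [b nb /andP[e1 e2]] := bruhat_flip e_prev (e_p (Ordinal lt_kh)).
have sz : size (set_nth 1%g p k b) == h.+1.
  by rewrite size_set_nth size_tuple; apply/eqP/maxn_idPr; exact: ltnW.
pose q : Path n h := Tuple sz.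
have vtx_q j : vtx q j = if j == k then b else vtx p j by rewrite /vtx nth_set_nth.
have path_q : is_path u v q.
  apply/and3P; split; rewrite ?vtx_q ?(ltn_eqF k_gt0) ?(gtn_eqF lt_kh) ?p0 ?ph //.
  apply/forallP => i; rewrite !vtx_q.
  have [-> | _] := eqVneq (i : nat) k; first by rewrite (gtn_eqF (ltnSn k)).
  have [ik' | ik'] := eqVneq i.+1 k; last exact: e_p.
  by rewrite -ik' in e1.
exists q; split=> [||j /negbTE jk]; rewrite ?vtx_q ?eqxx ?jk //.
apply/and3P; split=> //; apply/existsP; exists (Ordinal lt_kh).
rewrite /= k_gt0 vtx_q eqxx eq_sym nb andbT; apply/forallP => j.
by apply/implyP => /negbTE jk; rewrite vtx_q jk.
Qed.

Lemma flipclass_flip F p k : flipclass u v F -> p \in F -> 0 < k < h ->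
  exists2 q, q \in F & vtx q k != vtx p k /\ forall j, j != k -> vtx q j = vtx p j.
Proof.
case=> p0 path_p0 ->; rewrite inE => conn_p kh.
have path_p : is_path u v p.
  have closed_paths : closed (@flip_rel n h u v) [pred q | is_path u v q].
    by move=> x y /and3P[path_x path_y _]; rewrite !inE /= path_x path_y.
  by move: (closed_connect closed_paths conn_p); rewrite !inE /= path_p0 => <-.
have [q [flip_pq nq eq_q]] := is_path_flip path_p kh.
by exists q; rewrite ?inE ?(connect_trans conn_p (connect1 flip_pq)).
Qed.

End FlipClass.

Theorem lemma5p3 (n h : nat) (u v : {perm 'I_n}) (F : {set Path n h}) :
  flipclass u v F ->
  (forall (x : {perm 'I_n}) (i : nat), 1 < i -> ts_vertex F x i ->
     2 <= ts_indeg F x i) /\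
  (forall (x : {perm 'I_n}) (i : nat), i < h - 1 -> ts_vertex F x i ->
     2 <= ts_outdeg F x i).
Proof.
move=> flipF; split=> x i lt_i /andP[le_ih /existsP[p /andP[pF /eqP px]]].
- have /(flipclass_flip flipF pF)[q qF [nq eq_q]] : 0 < i.-1 < h by lia.
  apply/card_gt1P; exists (vtx p i.-1), (vtx q i.-1); split; last by rewrite eq_sym.
  + by rewrite inE; apply/existsP; exists p; rewrite pF px !eqxx.
  + by rewrite inE; apply/existsP; exists q; rewrite qF (eq_q i) ?px ?eqxx //; lia.
- have /(flipclass_flip flipF pF)[q qF [nq eq_q]] : 0 < i.+1 < h by lia.
  apply/card_gt1P; exists (vtx p i.+1), (vtx q i.+1); split; last by rewrite eq_sym.
  + by rewrite inE; apply/existsP; exists p; rewrite pF px !eqxx.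
  + by rewrite inE; apply/existsP; exists q; rewrite qF (eq_q i) ?px ?eqxx //; lia.
Qed.
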